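(* Let $S$ be epsilon-strongly graded and $g\in G$. Then: (i) if $M$ is a gr-simple graded left $S$-module, then $\mathrm{Ind}(M_g)$ is either zero or gr-simple; (ii) if $M$ is an injective object of $S$-gr which is $\mathcal{C}_g$-torsion free, then $\mathrm{Ind}(M_g)$ is an injective object of $S$-gr; (iii) if $M$ is a projective object of $S$-gr, then $M_g$ is a projective left $R$-module.
   Context: $G$ is a group with identity $e$; $S=\bigoplus_{g\in G}S_g$ is an associative unital ring graded by $G$, $R=S_e$. $S$ is epsilon-strongly graded if for each $g\in G$ the ideal $S_gS_{g^{-1}}$ (finite sums of products) of $R$ has an identity $\epsilon_g$ with $\epsilon_g s=s=s\epsilon_{g^{-1}}$ for all $s\in S_g$. $S$-gr is the category of graded left $S$-modules $M=\bigoplus_g M_g$ ($S_gM_h\subseteq M_{gh}$) with degree-preserving $S$-linear maps; $M_g$ is a left $R$-module. A graded submodule $N\subseteq M$ satisfies $N=\bigoplus_g(N\cap M_g)$; $M$ is gr-simple if $0$ and $M$ are its only graded submodules. $\mathrm{Ind}(N)=S\otimes_R N$ with grading $(S\otimes_R N)_h=S_h\otimes_R N$. $\mathcal{C}_g$ is the class of graded left $S$-modules $N$ with $N_g=0$; for $M$ in $S$-gr, $t_{\mathcal{C}_g}(M)$ is the sum of all graded submodules of $M$ belonging to $\mathcal{C}_g$, and $M$ is $\mathcal{C}_g$-torsion free if $t_{\mathcal{C}_g}(M)=0$. *)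

From HB Require Import structures.
From mathcomp Require Import all_boot all_order all_algebra.
Set Implicit Arguments. Unset Strict Implicit. Unset Printing Implicit Defensive.
Import GRing.Theory.
Local Open Scope ring_scope.

Section Defs.
Variable G : groupType.

Definition direct_sum (V : zmodType) (A : G -> V -> Prop) : Prop :=
  (forall g, A g 0 /\ (forall x y, A g x -> A g y -> A g (x - y))) /\
  (forall v : V, exists l : seq (G * V),
      (forall p, p \in l -> A p.1 p.2) /\ v = \sum_(p <- l) p.2) /\
  (forall l : seq (G * V), uniq (map fst l) ->
      (forall p, p \in l -> A p.1 p.2) -> \sum_(p <- l) p.2 = 0 ->
      forall p, p \in l -> p.2 = 0).

Variable S : pzRingType.
Variable SG : G -> S -> Prop.

Definition graded_ring : Prop :=
  direct_sum SG /\
  (forall g h (x y : S), SG g x -> SG h y -> SG (g * h)%g (x * y)).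

Definition ideal_gginv (g : G) (z : S) : Prop :=
  exists l : seq (S * S),
    (forall p, p \in l -> SG g p.1 /\ SG (g^-1)%g p.2) /\
    z = \sum_(p <- l) p.1 * p.2.

Definition eps_strongly_graded : Prop :=
  exists eps : G -> S, forall g,
    ideal_gginv g (eps g) /\
    (forall x, ideal_gginv g x -> eps g * x = x /\ x * eps g = x) /\
    (forall s, SG g s -> eps g * s = s /\ s * eps (g^-1)%g = s).

Definition graded_module (M : lmodType S) (MG : G -> M -> Prop) : Prop :=
  direct_sum MG /\
  (forall g h (s : S) (x : M), SG g s -> MG h x -> MG (g * h)%g (s *: x)).

Definition graded_submodule (M : lmodType S) (MG : G -> M -> Prop)
    (N : M -> Prop) : Prop :=
  N 0 /\ (forall x y, N x -> N y -> N (x - y)) /\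
  (forall (s : S) x, N x -> N (s *: x)) /\
  (forall x, N x -> exists l : seq (G * M),
      (forall p, p \in l -> MG p.1 p.2 /\ N p.2) /\ x = \sum_(p <- l) p.2).

Definition gr_simple (M : lmodType S) (MG : G -> M -> Prop) : Prop :=
  forall N : M -> Prop, graded_submodule MG N ->
    (forall x, N x -> x = 0) \/ (forall x, N x).

Definition gr_morphism (M M' : lmodType S) (MG : G -> M -> Prop)
    (MG' : G -> M' -> Prop) (f : M -> M') : Prop :=
  (forall (s : S) x y, f (s *: x + y) = s *: f x + f y) /\
  (forall g x, MG g x -> MG' g (f x)).

(* injective object of S-gr (monomorphisms of S-gr are the injective maps) *)
Definition gr_injective (M : lmodType S) (MG : G -> M -> Prop) : Prop :=
  forall (A B : lmodType S) (AG : G -> A -> Prop) (BG : G -> B -> Prop),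
    graded_module AG -> graded_module BG ->
    forall i : A -> B, gr_morphism AG BG i -> injective i ->
    forall f : A -> M, gr_morphism AG MG f ->
    exists h : B -> M, gr_morphism BG MG h /\ (forall a, h (i a) = f a).

(* projective object of S-gr (epimorphisms of S-gr are the surjective maps) *)
Definition gr_projective (M : lmodType S) (MG : G -> M -> Prop) : Prop :=
  forall (A B : lmodType S) (AG : G -> A -> Prop) (BG : G -> B -> Prop),
    graded_module AG -> graded_module BG ->
    forall p : A -> B, gr_morphism AG BG p -> (forall b, exists a, p a = b) ->
    forall f : M -> B, gr_morphism MG BG f ->
    exists h : M -> A, gr_morphism MG AG h /\ (forall x, p (h x) = f x).

(* Left modules over R = S_e : an abelian group V with an action of S whose
   restriction to S_e satisfies the module axioms (values of the action
   outside S_e are irrelevant). *)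
Definition R_module (V : zmodType) (act : S -> V -> V) : Prop :=
  forall (r r' : S) (x y : V), SG 1%g r -> SG 1%g r' ->
    act r (x + y) = act r x + act r y /\
    act (r + r') x = act r x + act r' x /\
    act (r * r') x = act r (act r' x) /\
    act 1 x = x.

Definition R_linear (V W : zmodType) (actV : S -> V -> V) (actW : S -> W -> W)
    (f : V -> W) : Prop :=
  forall (r : S) x y, SG 1%g r -> f (actV r x + y) = actW r (f x) + f y.

(* M_g is a projective left R-module (lifting property against surjective
   R-linear maps); maps out of M_g are represented by maps M -> _ whose
   values off M_g are irrelevant. *)
Definition R_projective_component (M : lmodType S) (MG : G -> M -> Prop)
    (g : G) : Prop :=
  forall (A B : zmodType) (actA : S -> A -> A) (actB : S -> B -> B),
    R_module actA -> R_module actB ->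
    forall p : A -> B, R_linear actA actB p -> (forall b, exists a, p a = b) ->
    forall f : M -> B,
      (forall (r : S) x y, SG 1%g r -> MG g x -> MG g y ->
         f (r *: x + y) = actB r (f x) + f y) ->
    exists h : M -> A,
      (forall (r : S) x y, SG 1%g r -> MG g x -> MG g y ->
         h (r *: x + y) = actA r (h x) + h y) /\
      (forall x, MG g x -> p (h x) = f x).

Definition in_Cg (M : lmodType S) (MG : G -> M -> Prop) (g : G)
    (N : M -> Prop) : Prop :=
  graded_submodule MG N /\ (forall x, N x -> MG g x -> x = 0).

Definition torsion_Cg (M : lmodType S) (MG : G -> M -> Prop) (g : G)
    (x : M) : Prop :=
  exists l : seq M,
    (forall y, y \in l -> exists N, in_Cg MG g N /\ N y) /\
    x = \sum_(y <- l) y.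

Definition Cg_torsion_free (M : lmodType S) (MG : G -> M -> Prop) (g : G)
    : Prop := forall x, torsion_Cg MG g x -> x = 0.

(* (T, beta) is a tensor product  S (x)_R M_g  (given by its universal
   property), with its natural left S-module structure
   s . (s' (x) n) = s s' (x) n.  beta s n stands for s (x) n; its values for
   n outside M_g are irrelevant. *)
Definition is_Ind (M : lmodType S) (MG : G -> M -> Prop) (g : G)
    (T : lmodType S) (beta : S -> M -> T) : Prop :=
  (forall s s' n, MG g n -> beta (s + s') n = beta s n + beta s' n) /\
  (forall s n n', MG g n -> MG g n' -> beta s (n + n') = beta s n + beta s n') /\
  (forall s r n, SG 1%g r -> MG g n -> beta (s * r) n = beta s (r *: n)) /\
  (forall (s s' : S) n, MG g n -> s *: beta s' n = beta (s * s') n) /\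
  (forall (A : zmodType) (f : S -> M -> A),
     (forall s s' n, MG g n -> f (s + s') n = f s n + f s' n) ->
     (forall s n n', MG g n -> MG g n' -> f s (n + n') = f s n + f s n') ->
     (forall s r n, SG 1%g r -> MG g n -> f (s * r) n = f s (r *: n)) ->
     exists phi : T -> A, (forall t t', phi (t + t') = phi t + phi t') /\
       (forall s n, MG g n -> phi (beta s n) = f s n)) /\
  (forall (A : zmodType) (phi phi' : T -> A),
     (forall t t', phi (t + t') = phi t + phi t') ->
     (forall t t', phi' (t + t') = phi' t + phi' t') ->
     (forall s n, MG g n -> phi (beta s n) = phi' (beta s n)) ->
     forall t, phi t = phi' t).

Definition Ind_grading (M : lmodType S) (MG : G -> M -> Prop) (g : G)
    (T : lmodType S) (beta : S -> M -> T) (h : G) (t : T) : Prop :=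
  exists l : seq (S * M),
    (forall p, p \in l -> SG h p.1 /\ MG g p.2) /\
    t = \sum_(p <- l) beta p.1 p.2.

End Defs.

From HB Require Import structures.
From mathcomp Require Import all_boot all_order all_algebra.
From mathcomp Require Import boolp functions.
From Stdlib Require Import ClassicalEpsilon.
Set Implicit Arguments. Unset Strict Implicit. Unset Printing Implicit Defensive.
Import GRing.Theory.
Local Open Scope ring_scope.

(* In an
   epsilon-strongly graded ring, eps k = sum_i a_i b_i with a_i in S_k,
   b_i in S_{k^-1}, and eps k acts as the identity on S_k.
   For T = S (x)_R M_g with its grading T_k = S_k (x) M_g we use the
   multiplication map mu : T -> M, s (x) n |-> s n, which sends T_k into
   M_{kg}.  The key identity [Ind_reconstruct] says that every u in T_k is
   recovered from mu u as  u = sum_i a_i (x) b_i (mu u).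
   (i)  Given a graded submodule N of T, the S-span of {m in M_g | 1 (x) m in N}
        is a graded submodule of M; by gr-simplicity it is 0 (then N = 0 by
        the reconstruction identity) or M (then N = T).
   (ii) If M is C_g-torsion free, eps k acts trivially on M_{kg}, which makes
        mu an isomorphism from T onto M with degrees shifted by g; injectivity
        in S-gr is invariant under such isomorphisms.
   (iii) For an R-module A, the coinduced graded module of finitely supported
        R-linear maps S -> A turns R-linear surjections into graded
        surjections (this uses eps) and R-linear maps M_g -> B into graded
        morphisms M -> Coind B; lifting along the projectivity of M and
        evaluating at 1 gives the lifting property of M_g. *)

Definition additive_map (W W' : zmodType) (f : W -> W') : Prop :=
  forall x y, f (x + y) = f x + f y.

Section AdditiveMap.
Variables (W W' : zmodType) (f : W -> W').
Hypothesis fD : additive_map f.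

Lemma additive_map0 : f 0 = 0.
Proof. by apply: (addrI (f 0)); rewrite -fD !addr0. Qed.

Lemma additive_mapN x : f (- x) = - f x.
Proof. by apply: (addrI (f x)); rewrite -fD !subrr additive_map0. Qed.

Lemma additive_mapB x y : f (x - y) = f x - f y.
Proof. by rewrite fD additive_mapN. Qed.

Lemma additive_map_sum (I : Type) (r : seq I) (F : I -> W) :
  f (\sum_(i <- r) F i) = \sum_(i <- r) f (F i).
Proof.
elim: r => [|a r IH]; first by rewrite !big_nil additive_map0.
by rewrite !big_cons fD IH.
Qed.
End AdditiveMap.

Lemma big_closed (V : zmodType) (Q : V -> Prop) (I : eqType) (r : seq I)
    (P : pred I) (F : I -> V) :
  Q 0 -> (forall x y, Q x -> Q y -> Q (x + y)) ->
  (forall i, i \in r -> P i -> Q (F i)) -> Q (\sum_(i <- r | P i) F i).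
Proof.
move=> Q0 QD QF; rewrite big_seq_cond; apply: (big_ind Q) => // i /andP[].
exact: QF.
Qed.

Lemma subgroup_addr (V : zmodType) (Q : V -> Prop) x y :
  Q 0 -> (forall x y, Q x -> Q y -> Q (x - y)) -> Q x -> Q y -> Q (x + y).
Proof.
move=> Q0 QB Qx Qy; rewrite -[y]opprK -[- y]sub0r.
by apply: (QB) => //; apply: (QB).
Qed.

Lemma sum_if_eq (V : zmodType) (K : eqType) (s : seq K) k (x : V) :
  uniq s -> \sum_(j <- s) (if k == j then x else 0) = if k \in s then x else 0.
Proof.
elim: s => [|a s IH] /=; first by rewrite big_nil.
case/andP => nas us; rewrite big_cons IH // in_cons.
case: eqP => [->|_] /=; last by rewrite add0r.
by rewrite (negbTE nas) addr0.
Qed.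

Definition regroup (K : eqType) (V : zmodType) (l : seq (K * V)) : seq (K * V) :=
  [seq (k, \sum_(p <- l | p.1 == k) p.2) | k <- undup (map fst l)].

Section Regroup.
Variables (K : eqType) (V : zmodType).

Lemma regroup_uniq (l : seq (K * V)) : uniq (map fst (regroup l)).
Proof. by rewrite -map_comp map_id undup_uniq. Qed.

Lemma regroup_sum (l : seq (K * V)) :
  \sum_(p <- regroup l) p.2 = \sum_(p <- l) p.2.
Proof.
rewrite big_map /=; under eq_bigr => k _ do rewrite big_mkcond /=.
rewrite exchange_big /=; apply: eq_big_seq => p pl.
rewrite (eq_bigr (fun k => if p.1 == k then p.2 else 0)); last first.
  by move=> k _; case: ifP.
by rewrite sum_if_eq ?undup_uniq // mem_undup map_f.
Qed.

Lemma regroup_closed (Q : K -> V -> Prop) (l : seq (K * V)) :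
  (forall k, Q k 0) -> (forall k x y, Q k x -> Q k y -> Q k (x + y)) ->
  (forall p, p \in l -> Q p.1 p.2) -> forall p, p \in regroup l -> Q p.1 p.2.
Proof.
move=> Q0 QD Ql p /mapP[k _ ->] /=.
apply: big_closed => [|x y|q ql /eqP <-]; [exact: Q0 | exact: QD | exact: Ql].
Qed.
End Regroup.

Section DirectSum.
Variables (G : groupType) (V : zmodType) (A : G -> V -> Prop).
Hypothesis hA : direct_sum A.

Lemma dsum0 k : A k 0. Proof. exact: (hA.1 k).1. Qed.
Lemma dsumB k x y : A k x -> A k y -> A k (x - y). Proof. exact: (hA.1 k).2. Qed.
Lemma dsumD k x y : A k x -> A k y -> A k (x + y).
Proof. by apply: subgroup_addr; [exact: dsum0 | exact: dsumB]. Qed.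
Lemma dsumN k x : A k x -> A k (- x).
Proof. by move=> hx; rewrite -sub0r; apply: dsumB => //; apply: dsum0. Qed.
Lemma dsum_sum k (I : eqType) (r : seq I) (P : pred I) (F : I -> V) :
  (forall i, i \in r -> P i -> A k (F i)) -> A k (\sum_(i <- r | P i) F i).
Proof. by apply: big_closed; [exact: dsum0 | exact: dsumD]. Qed.

Lemma dsum_component0 (l : seq (G * V)) :
  (forall p, p \in l -> A p.1 p.2) -> \sum_(p <- l) p.2 = 0 ->
  forall k, \sum_(p <- l | p.1 == k) p.2 = 0.
Proof.
move=> hl hs k.
have hl' := regroup_closed dsum0 (@dsumD) hl.
have := hA.2.2 _ (regroup_uniq l) hl'; rewrite regroup_sum => /(_ hs).
case kin: (k \in map fst l) => h.
  apply: (h (k, \sum_(p <- l | p.1 == k) p.2)).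
  by apply/mapP; exists k; rewrite ?mem_undup.
rewrite big1_seq // => p /andP[/eqP pk pl]; move: kin; rewrite -pk.
by rewrite map_f.
Qed.

Lemma dsum_component_eq (l1 l2 : seq (G * V)) :
  (forall p, p \in l1 -> A p.1 p.2) -> (forall p, p \in l2 -> A p.1 p.2) ->
  \sum_(p <- l1) p.2 = \sum_(p <- l2) p.2 ->
  forall k, \sum_(p <- l1 | p.1 == k) p.2 = \sum_(p <- l2 | p.1 == k) p.2.
Proof.
move=> h1 h2 e k; apply/eqP; rewrite -subr_eq0; apply/eqP.
pose l := l1 ++ [seq (p.1, - p.2) | p <- l2].
have hl : forall p, p \in l -> A p.1 p.2.
  move=> p; rewrite mem_cat => /orP[/h1 //|/mapP[q /h2 q2 ->]] /=.
  exact: dsumN.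
have := dsum_component0 hl _ k; rewrite !big_cat !big_map /= e sumrN subrr.
by rewrite sumrN => ->.
Qed.

Definition dsdec (v : V) : seq (G * V) :=
  epsilon (inhabits [::])
    (fun l => (forall p, p \in l -> A p.1 p.2) /\ v = \sum_(p <- l) p.2).

Lemma dsdecP v :
  (forall p, p \in dsdec v -> A p.1 p.2) /\ v = \sum_(p <- dsdec v) p.2.
Proof. exact: (epsilon_spec _ _ (hA.2.1 v)). Qed.

Definition dsproj k v := \sum_(p <- dsdec v | p.1 == k) p.2.

Lemma dsproj_hom k v : A k (dsproj k v).
Proof. by apply: dsum_sum => p pl /eqP <-; exact: (dsdecP v).1. Qed.

Lemma dsproj_spec (l : seq (G * V)) v k : (forall p, p \in l -> A p.1 p.2) ->
  v = \sum_(p <- l) p.2 -> dsproj k v = \sum_(p <- l | p.1 == k) p.2.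
Proof.
move=> hl e; apply: dsum_component_eq => //; first exact: (dsdecP v).1.
by rewrite -e -(dsdecP v).2.
Qed.

Lemma dsprojD k : additive_map (dsproj k).
Proof.
move=> u v; rewrite (@dsproj_spec (dsdec u ++ dsdec v)) ?big_cat //.
  by move=> p; rewrite mem_cat => /orP[/(dsdecP u).1|/(dsdecP v).1].
by rewrite -(dsdecP u).2 -(dsdecP v).2.
Qed.

Lemma dsproj_in j k v : A j v -> dsproj k v = if j == k then v else 0.
Proof.
move=> hv; rewrite (@dsproj_spec [:: (j, v)] v k).
- by rewrite big_cons big_nil /=; case: ifP => _; rewrite ?addr0.
- by move=> p; rewrite inE => /eqP->.
- by rewrite big_cons big_nil addr0.
Qed.

Lemma dsproj_id k v : A k v -> dsproj k v = v.
Proof. by move=> hv; rewrite (dsproj_in k hv) eqxx. Qed.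

Lemma sum_dsproj_fun (W : zmodType) (Phi : V -> W) (L : seq G) v :
  uniq L -> additive_map Phi ->
  (forall j x, j \notin L -> A j x -> Phi x = 0) ->
  Phi v = \sum_(k <- L) Phi (dsproj k v).
Proof.
move=> uL hP h0; have [hdec edec] := dsdecP v.
rewrite {1}edec (additive_map_sum hP).
transitivity (\sum_(k <- L) \sum_(p <- dsdec v)
                  (if p.1 == k then Phi p.2 else 0)); last first.
  apply: eq_bigr => k _; rewrite /dsproj [X in Phi X]big_mkcond.
  rewrite (additive_map_sum hP).
  by apply: eq_bigr => p _; case: ifP; rewrite ?(additive_map0 hP).
rewrite exchange_big /=; apply: eq_big_seq => p pd.
rewrite (eq_bigr (fun k => if p.1 == k then Phi p.2 else 0)); last first.
  by move=> k _; case: ifP.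
by rewrite sum_if_eq //; case: ifPn => // nL; apply: h0 nL (hdec p pd).
Qed.

Lemma dsproj_fun (W : zmodType) (Phi : V -> W) k v :
  additive_map Phi -> (forall j x, j != k -> A j x -> Phi x = 0) ->
  Phi v = Phi (dsproj k v).
Proof.
move=> hP h0; rewrite (@sum_dsproj_fun _ Phi [:: k]) // ?big_seq1 //.
by move=> j x; rewrite inE; apply: h0.
Qed.
End DirectSum.

Lemma dsproj_morph (G : groupType) (V W : zmodType) (A : G -> V -> Prop)
    (B : G -> W -> Prop) (phi : G -> G) (f : V -> W) :
  direct_sum A -> direct_sum B -> injective phi -> additive_map f ->
  (forall k x, A k x -> B (phi k) (f x)) ->
  forall k v, dsproj B (phi k) (f v) = f (dsproj A k v).
Proof.
move=> hA hB iphi fD fh k v; have [hdec edec] := dsdecP hA v.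
rewrite (@dsproj_spec _ _ _ hB [seq (phi p.1, f p.2) | p <- dsdec A v]).
- rewrite big_map /dsproj [X in f X]big_mkcond (additive_map_sum fD) big_mkcond.
  apply: eq_bigr => p _ /=; rewrite (inj_eq iphi).
  by case: ifP; rewrite ?(additive_map0 fD).
- by move=> p /mapP[q qd ->] /=; apply: fh; exact: hdec.
- by rewrite big_map -(additive_map_sum fD) -edec.
Qed.

Section GradedRing.
Variables (G : groupType) (S : pzRingType) (SG : G -> S -> Prop).
Hypothesis hgr : graded_ring SG.

(* The unit is homogeneous of degree e: its e-component is a left unit on
   every homogeneous element, hence on S. *)
Lemma graded_one : SG 1%g 1.
Proof.
have hS := hgr.1; set u := dsproj SG 1%g 1.
have hu : forall s, u * s = s.
  move=> s; rewrite (dsdecP hS s).2 mulr_sumr; apply: eq_big_seq => p pd.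
  have hp := (dsdecP hS s).1 p pd.
  have := @dsproj_morph _ _ _ _ _ (fun k => (k * p.1)%g) (fun x => x * p.2)
    hS hS (mulIg p.1) (fun x y => mulrDl x y p.2)
    (fun k x hx => hgr.2 _ _ _ _ hx hp) 1%g 1.
  by rewrite mul1g mul1r (dsproj_id hS hp).
have -> : 1 = u by rewrite -[u]mulr1 hu.
exact: dsproj_hom.
Qed.

Lemma dsproj_mul_e r k t : SG 1%g r -> dsproj SG k (r * t) = r * dsproj SG k t.
Proof.
move=> hr; have := @dsproj_morph _ _ _ _ _ (fun j => (1 * j)%g) (fun t => r * t)
  hgr.1 hgr.1 (mulgI 1%g) (fun x y => mulrDr r x y)
  (fun j x hx => hgr.2 _ _ _ _ hr hx) k t.
by rewrite mul1g.
Qed.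

Section GradedModule.
Variables (M : lmodType S) (MG : G -> M -> Prop).
Hypothesis hM : graded_module SG MG.

Lemma dsproj_scale_e r k v : SG 1%g r -> dsproj MG k (r *: v) = r *: dsproj MG k v.
Proof.
move=> hr; have := @dsproj_morph _ _ _ _ _ (fun j => (1 * j)%g) (fun v => r *: v)
  hM.1 hM.1 (mulgI 1%g) (fun x y => scalerDr r x y)
  (fun j x hx => hM.2 _ _ _ _ hr hx) k v.
by rewrite mul1g.
Qed.

Lemma dsproj_scale_hom h k s x :
  MG h x -> dsproj MG (k * h)%g (s *: x) = dsproj SG k s *: x.
Proof.
move=> hx; exact: (@dsproj_morph _ _ _ _ _ (fun j => (j * h)%g) (fun s => s *: x)
  hgr.1 hM.1 (mulIg h) (fun a b => scalerDl x a b)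
  (fun j a ha => hM.2 _ _ _ _ ha hx)).
Qed.

Lemma submodule_sum (N : M -> Prop) (I : eqType) (r : seq I) (P : pred I)
    (F : I -> M) :
  graded_submodule MG N -> (forall i, i \in r -> P i -> N (F i)) ->
  N (\sum_(i <- r | P i) F i).
Proof.
move=> [N0 [NB _]]; apply: big_closed => // x y; exact: subgroup_addr.
Qed.

Definition Sspan (P : M -> Prop) (x : M) : Prop :=
  exists l : seq (S * M),
    (forall p, p \in l -> P p.2) /\ x = \sum_(p <- l) p.1 *: p.2.

Lemma Sspan_gen (P : M -> Prop) s m : P m -> Sspan P (s *: m).
Proof.
move=> hm; exists [:: (s, m)]; split; last by rewrite big_seq1.
by move=> p; rewrite inE => /eqP->.
Qed.

Lemma Sspan_graded (P : M -> Prop) :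
  (forall m, P m -> exists h, MG h m) -> graded_submodule MG (Sspan P).
Proof.
move=> Phom; split; [|split; [|split]].
- by exists [::]; rewrite big_nil.
- move=> x y [l1 [h1 ->]] [l2 [h2 ->]].
  exists (l1 ++ [seq (- p.1, p.2) | p <- l2]); split.
    by move=> p; rewrite mem_cat => /orP[/h1 //|/mapP[q /h2 q2 ->]].
  rewrite big_cat big_map -sumrN; congr (_ + _).
  by apply: eq_bigr => p _; rewrite scaleNr.
- move=> s x [l [hl ->]]; exists [seq (s * p.1, p.2) | p <- l]; split.
    by move=> p /mapP[q ql ->]; exact: hl q ql.
  by rewrite scaler_sumr big_map; apply: eq_bigr => p _; rewrite scalerA.
move=> x [l [hl ->]]; elim: l hl => [|[s m] l IH] hl.
  by exists [::]; rewrite !big_nil.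
have Pm : P m by exact: (hl _ (mem_head _ _)).
have [h hm] := Phom m Pm.
rewrite big_cons; have [L [hL ->]] : exists L : seq (G * M),
    (forall p, p \in L -> MG p.1 p.2 /\ Sspan P p.2) /\
    \sum_(p <- l) p.1 *: p.2 = \sum_(p <- L) p.2.
  by apply: IH => p pl; apply: hl; rewrite inE pl orbT.
have [hdec edec] := dsdecP hgr.1 s.
exists ([seq ((q.1 * h)%g, q.2 *: m) | q <- dsdec SG s] ++ L); split.
  move=> p; rewrite mem_cat => /orP[/mapP[q qd ->]|/hL //] /=.
  by split; [exact: hM.2 (hdec q qd) hm | exact: Sspan_gen].
by rewrite big_cat big_map /= {1}edec scaler_suml.
Qed.
End GradedModule.
End GradedRing.

Lemma shift_graded (G : groupType) (S : pzRingType) (SG : G -> S -> Prop)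
    (X : lmodType S) (XG : G -> X -> Prop) (c : G) :
  graded_module SG XG -> graded_module SG (fun k => XG (k * c)%g).
Proof.
move=> [[h1 [h2 h3]] h4]; split; last first.
  by move=> l h s x hs hx; rewrite -mulgA; apply: h4.
split; first by move=> k; apply: h1.
split.
  move=> v; have [l [hl el]] := h2 v.
  exists [seq ((p.1 * c^-1)%g, p.2) | p <- l]; split; last by rewrite big_map.
  by move=> p /mapP[q ql ->] /=; rewrite mulgVK; apply: hl.
move=> l ul hl sl p pl.
apply: (h3 [seq ((q.1 * c)%g, q.2) | q <- l] _ _ _ ((p.1 * c)%g, p.2)).
- by rewrite -map_comp (map_comp (fun k => (k * c)%g) fst) map_inj_uniq //;
    apply: mulIg.
- by move=> q /mapP[r rl ->] /=; apply: hl.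
- by rewrite big_map.
- by apply/mapP; exists p.
Qed.

Definition eps_unit (G : groupType) (S : pzRingType) (SG : G -> S -> Prop)
    (eps : G -> S) : Prop :=
  forall g, ideal_gginv SG g (eps g) /\
    (forall x, ideal_gginv SG g x -> eps g * x = x /\ x * eps g = x) /\
    (forall s, SG g s -> eps g * s = s /\ s * eps (g^-1)%g = s).

Section Eps.
Variables (G : groupType) (S : pzRingType) (SG : G -> S -> Prop).
Hypothesis hgr : graded_ring SG.
Variable eps : G -> S.
Hypothesis heps : eps_unit SG eps.

Definition eps_dec (k : G) : seq (S * S) :=
  epsilon (inhabits [::]) (fun l =>
    (forall p, p \in l -> SG k p.1 /\ SG (k^-1)%g p.2) /\
    eps k = \sum_(p <- l) p.1 * p.2).

Lemma eps_decP k :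
  (forall p, p \in eps_dec k -> SG k p.1 /\ SG (k^-1)%g p.2) /\
  eps k = \sum_(p <- eps_dec k) p.1 * p.2.
Proof. exact: (epsilon_spec _ _ (heps k).1). Qed.

Lemma eps_hom k : SG 1%g (eps k).
Proof.
have [hl ->] := eps_decP k; apply: (dsum_sum hgr.1) => p pl _.
by rewrite -(mulgV k); apply: hgr.2; [exact: (hl p pl).1 | exact: (hl p pl).2].
Qed.

Lemma eps_left k s : SG k s -> eps k * s = s.
Proof. by move=> h; apply: ((heps k).2.2 s h).1. Qed.

Lemma eps_right k s : SG (k^-1)%g s -> s * eps k = s.
Proof. by move=> h; have := ((heps (k^-1)%g).2.2 s h).2; rewrite invgK. Qed.
End Eps.

Section Torsion.
Variables (G : groupType) (S : pzRingType) (SG : G -> S -> Prop).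
Hypothesis hgr : graded_ring SG.
Variable eps : G -> S.
Hypothesis heps : eps_unit SG eps.
Variables (M : lmodType S) (MG : G -> M -> Prop) (g : G).
Hypothesis hM : graded_module SG MG.

(* Homogeneous elements of degree h annihilated by S_{g h^-1}, the component
   of S carrying degree h to degree g. *)
Definition ann_hom (m : M) : Prop :=
  exists h, MG h m /\ forall s, SG (g * h^-1)%g s -> s *: m = 0.

Lemma ann_span_Cg : in_Cg MG g (Sspan ann_hom).
Proof.
split; first by apply: (Sspan_graded hgr hM) => m [h [hm _]]; exists h.
move=> x [l [hl ->]] hx.
rewrite -(dsproj_id hM.1 hx) (additive_map_sum (dsprojD hM.1 g)).
apply: big1_seq => p /andP[_ pl]; have [h [hm hann]] := hl p pl.
rewrite -[g](mulgVK h) (dsproj_scale_hom hgr hM) //.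
by apply: hann; exact: (dsproj_hom hgr.1).
Qed.

(* For C_g-torsion free M, eps k acts as the identity on M_{kg}: the element
   x - eps k x of degree kg is annihilated by S_{k^-1}. *)
Lemma torsion_free_eps : Cg_torsion_free MG g ->
  forall k x, MG (k * g)%g x -> eps k *: x = x.
Proof.
move=> htf k x hx; apply/eqP; rewrite eq_sym -subr_eq0; apply/eqP; apply: htf.
exists [:: x - eps k *: x]; split; last by rewrite big_seq1.
move=> y; rewrite inE => /eqP->; exists (Sspan ann_hom).
split; first exact: ann_span_Cg.
rewrite -[_ - _]scale1r; apply: Sspan_gen; exists (k * g)%g; split.
  apply: (dsumB hM.1) => //; rewrite -[(k * g)%g]mul1g.
  by apply: hM.2 => //; exact: (eps_hom hgr heps).
move=> s; rewrite invgM mulgA mulgV mul1g => hs.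
by rewrite scalerBr scalerA (eps_right heps) // subrr.
Qed.
End Torsion.

Lemma gr_injective_transport (G : groupType) (S : pzRingType)
    (SG : G -> S -> Prop) (M T : lmodType S) (MG : G -> M -> Prop)
    (TG : G -> T -> Prop) (c : G) (phi : T -> M) :
  (forall s x y, phi (s *: x + y) = s *: phi x + phi y) -> injective phi ->
  (forall y, exists t, phi t = y) ->
  (forall k t, TG k t -> MG (k * c)%g (phi t)) ->
  (forall k y, MG (k * c)%g y -> exists t, TG k t /\ phi t = y) ->
  gr_injective SG MG -> gr_injective SG TG.
Proof.
move=> phiL phiI phiS phiH phiH' hinj A B AG BG hA hB i [iL iG] iinj f [fL fG].
have hiM : gr_morphism (fun k => AG (k * c^-1)%g) (fun k => BG (k * c^-1)%g) i.
  by split => // k x; apply: iG.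
have hfM : gr_morphism (fun k => AG (k * c^-1)%g) MG (fun a => phi (f a)).
  split => [s x y|k x hx]; first by rewrite fL phiL.
  by have := phiH _ _ (fG _ _ hx); rewrite mulgVK.
have [H [[HL HG] Hi]] := hinj A B _ _ (shift_graded c^-1 hA)
  (shift_graded c^-1 hB) i hiM iinj _ hfM.
pose inv y := epsilon (inhabits 0) (fun t => phi t = y).
have invE : forall y, phi (inv y) = y.
  by move=> y; exact: (epsilon_spec _ _ (phiS y)).
exists (fun b => inv (H b)); split; [split|].
- by move=> s x y; apply: phiI; rewrite phiL !invE HL.
- move=> k x hx; have hx' : BG (k * c * c^-1)%g x by rewrite mulgK.
  have [t [ht et]] := phiH' k (H x) (HG _ _ hx').
  by have -> : inv (H x) = t by apply: phiI; rewrite invE et.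
- by move=> a; apply: phiI; rewrite invE Hi.
Qed.

Section Span.
Variables (V : zmodType) (P : V -> Prop).

Definition spanb : {pred V} := fun v => `[< exists l : seq V,
  (forall x, x \in l -> P x \/ P (- x)) /\ v = \sum_(x <- l) x >].

Lemma spanb_closed : GRing.zmod_closed spanb.
Proof.
split; first by apply/asboolP; exists [::]; rewrite big_nil.
move=> u v /asboolP[lu [hu ->]] /asboolP[lv [hv ->]]; apply/asboolP.
exists (lu ++ map -%R lv); split; last by rewrite big_cat big_map sumrN.
move=> x; rewrite mem_cat => /orP[/hu //|/mapP[y /hv hy ->]].
by rewrite opprK; case: hy; [right|left].
Qed.
HB.instance Definition _ := GRing.isZmodClosed.Build V spanb spanb_closed.

Inductive spanT := SpanT (v : V) of v \in spanb.
Definition spanval (w : spanT) := let: SpanT v _ := w in v.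
HB.instance Definition _ := [isSub of spanT for spanval].
HB.instance Definition _ := [Choice of spanT by <:].
HB.instance Definition _ := [SubChoice_isSubZmodule of spanT by <:].

Lemma spanb_gen x : P x -> x \in spanb.
Proof.
move=> hx; apply/asboolP; exists [:: x]; split; last by rewrite big_seq1.
by move=> y; rewrite inE => /eqP->; left.
Qed.
End Span.

Section Induced.
Variables (G : groupType) (S : pzRingType) (SG : G -> S -> Prop).
Hypothesis hgr : graded_ring SG.
Variables (M : lmodType S) (MG : G -> M -> Prop) (g : G).
Hypothesis hM : graded_module SG MG.
Variables (T : lmodType S) (beta : S -> M -> T).
Hypothesis hI : is_Ind SG MG g beta.
Local Notation IG := (Ind_grading SG MG g beta).

Lemma beta_addl s s' n : MG g n -> beta (s + s') n = beta s n + beta s' n.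
Proof. exact: hI.1. Qed.
Lemma beta_addr s n n' :
  MG g n -> MG g n' -> beta s (n + n') = beta s n + beta s n'.
Proof. exact: hI.2.1. Qed.
Lemma beta_bal s r n : SG 1%g r -> MG g n -> beta (s * r) n = beta s (r *: n).
Proof. exact: hI.2.2.1. Qed.
Lemma beta_scale s s' n : MG g n -> s *: beta s' n = beta (s * s') n.
Proof. exact: hI.2.2.2.1. Qed.

Lemma betaNl s n : MG g n -> beta (- s) n = - beta s n.
Proof.
by move=> hn; apply: (additive_mapN (f := beta^~ n)) => x y; apply: beta_addl.
Qed.

Lemma beta0r s : beta s 0 = 0.
Proof.
have h0 := dsum0 hM.1 g.
by apply: (addrI (beta s 0)); rewrite -beta_addr // !addr0.
Qed.

Lemma beta_suml (I : Type) (r : seq I) (F : I -> S) n : MG g n ->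
  beta (\sum_(i <- r) F i) n = \sum_(i <- r) beta (F i) n.
Proof.
by move=> hn; apply: (additive_map_sum (f := beta^~ n)) => x y; apply: beta_addl.
Qed.

Lemma beta_sumr (I : eqType) (r : seq I) (F : I -> M) s :
  (forall i, i \in r -> MG g (F i)) ->
  beta s (\sum_(i <- r) F i) = \sum_(i <- r) beta s (F i).
Proof.
elim: r => [|a r IH] h; first by rewrite !big_nil beta0r.
have hr : forall i, i \in r -> MG g (F i) by move=> i ir; apply: h; rewrite inE ir orbT.
rewrite !big_cons beta_addr ?IH //; first by apply: h; rewrite inE eqxx.
by apply: (dsum_sum hM.1) => i ir _; apply: hr.
Qed.

Definition is_beta (x : T) := exists s n, MG g n /\ x = beta s n.

(* T is generated as an abelian group by the elements s (x) n: the universal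
   property maps T into this subgroup, compatibly with the inclusion. *)
Lemma Ind_in_span t : t \in spanb is_beta.
Proof.
have inb : forall s n, MG g n -> beta s n \in spanb is_beta.
  by move=> s n hn; apply: spanb_gen; exists s, n.
pose f s n : spanT is_beta := insubd 0 (beta s n).
have fv : forall s n, MG g n -> spanval (f s n) = beta s n.
  by move=> s n hn; rewrite -[spanval _]/(val _) val_insubd inb.
have fl : forall s s' n, MG g n -> f (s + s') n = f s n + f s' n.
  by move=> s s' n hn; apply: val_inj; rewrite /= !fv // beta_addl.
have fr : forall s n n', MG g n -> MG g n' -> f s (n + n') = f s n + f s n'.
  move=> s n n' hn hn'; apply: val_inj; rewrite /= !fv // ?beta_addr //.
  exact: (dsumD hM.1).
have fb : forall s r n, SG 1%g r -> MG g n -> f (s * r) n = f s (r *: n).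
  by move=> s r n hr hn; rewrite /f beta_bal.
have [phi [phiD phib]] := hI.2.2.2.2.1 _ f fl fr fb.
have e : forall t, spanval (phi t) = t.
  apply: (hI.2.2.2.2.2 _ (fun t => spanval (phi t)) id) => //.
  - by move=> x y; rewrite phiD.
  - by move=> s n hn; rewrite phib // fv.
by rewrite -[t in t \in _]e; exact: (valP (phi t)).
Qed.

Lemma Ind_gen t : exists l : seq (S * M),
  (forall p, p \in l -> MG g p.2) /\ t = \sum_(p <- l) beta p.1 p.2.
Proof.
have /asboolP[lx [+ ->]] := Ind_in_span t.
elim: lx => [|a lx IH] h; first by exists [::]; rewrite !big_nil.
rewrite big_cons; have [l [hl ->]] := IH (fun x xl => h x (mem_behead (s := a :: lx) xl)).
have [[s [n [hn ->]]]|[s [n [hn ea]]]] := h a (mem_head _ _).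
  exists ((s, n) :: l); rewrite big_cons; split => // p.
  by rewrite inE => /orP[/eqP-> //|/hl].
exists ((- s, n) :: l); rewrite big_cons betaNl // -ea opprK; split => // p.
by rewrite inE => /orP[/eqP-> //|/hl].
Qed.

Definition Ind_mu : T -> M := epsilon (inhabits (fun _ => 0)) (fun mu =>
  additive_map mu /\ forall s n, MG g n -> mu (beta s n) = s *: n).

Lemma Ind_muP :
  additive_map Ind_mu /\ forall s n, MG g n -> Ind_mu (beta s n) = s *: n.
Proof.
apply: (epsilon_spec _ _ (hI.2.2.2.2.1 M (fun s n => s *: n) _ _ _)).
- by move=> s s' n _; exact: scalerDl.
- by move=> s n n' _ _; exact: scalerDr.
- by move=> s r n _ _; rewrite scalerA.
Qed.

Local Notation mu := Ind_mu.
Let muD : additive_map mu := Ind_muP.1.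
Let mub : forall s n, MG g n -> mu (beta s n) = s *: n := Ind_muP.2.

Lemma IG0 k : IG k 0. Proof. by exists [::]; rewrite big_nil. Qed.

Lemma IGD k x y : IG k x -> IG k y -> IG k (x + y).
Proof.
move=> [l1 [h1 ->]] [l2 [h2 ->]]; exists (l1 ++ l2); rewrite big_cat.
by split => // p; rewrite mem_cat => /orP[/h1|/h2].
Qed.

Lemma Ind_hom_decomposition t : exists K : seq (G * T),
  uniq (map fst K) /\ (forall p, p \in K -> IG p.1 p.2) /\ t = \sum_(p <- K) p.2.
Proof.
have [l [hl ->]] := Ind_gen t.
pose L := [seq (q.1, beta q.2 p.2) | p <- l, q <- dsdec SG p.1].
have hL : forall x, x \in L -> IG x.1 x.2.
  move=> x /allpairsPdep[p [q [pl qd ->]]] /=; exists [:: (q.2, p.2)].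
  rewrite big_seq1; split => // r; rewrite inE => /eqP-> /=.
  by split; [exact: (dsdecP hgr.1 p.1).1 q qd | exact: hl].
exists (regroup L); split; first exact: regroup_uniq.
split; first exact: regroup_closed IG0 IGD hL.
rewrite regroup_sum big_allpairs_dep /=; apply: eq_big_seq => p pl.
by rewrite {1}(dsdecP hgr.1 p.1).2 beta_suml //; exact: hl.
Qed.

(* mu is S-linear: both sides are additive in t and agree on pure tensors. *)
Lemma mu_scale s t : mu (s *: t) = s *: mu t.
Proof.
apply: (hI.2.2.2.2.2 _ (fun t => mu (s *: t)) (fun t => s *: mu t)).
- by move=> x y; rewrite scalerDr muD.
- by move=> x y; rewrite muD scalerDr.
- by move=> s' n hn; rewrite beta_scale // !mub // scalerA.
Qed.

Lemma mu_hom k t : IG k t -> MG (k * g)%g (mu t).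
Proof.
move=> [l [hl ->]]; rewrite (additive_map_sum muD).
apply: (dsum_sum hM.1) => p pl _; have [h1 h2] := hl p pl.
by rewrite mub //; apply: hM.2.
Qed.

Variable eps : G -> S.
Hypothesis heps : eps_unit SG eps.

Lemma Ind_eps_fix k u : IG k u -> eps k *: u = u.
Proof.
move=> [l [hl ->]]; rewrite scaler_sumr; apply: eq_big_seq => p pl.
have [h1 h2] := hl p pl; by rewrite beta_scale // (eps_left heps).
Qed.

(* For b of degree k^-1, b u = 1 (x) b mu(u) on T_k, as b S_k lies in R. *)
Lemma Ind_pull k b u : SG (k^-1)%g b -> IG k u ->
  MG g (b *: mu u) /\ b *: u = beta 1 (b *: mu u).
Proof.
move=> hb hu; split.
  by rewrite -[g](mulKg k); apply: hM.2 => //; exact: mu_hom.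
move: hu => [l [hl ->]].
have hbp : forall p, p \in l -> SG 1%g (b * p.1).
  by move=> p pl; rewrite -(mulVg k); apply: hgr.2 => //; exact: (hl p pl).1.
rewrite (additive_map_sum muD) scaler_sumr scaler_sumr beta_sumr; last first.
  move=> p pl; rewrite mub ?scalerA; last exact: (hl p pl).2.
  by rewrite -[g]mul1g; apply: hM.2; [exact: hbp | exact: (hl p pl).2].
apply: eq_big_seq => p pl; have [_ hp2] := hl p pl.
by rewrite beta_scale // mub // scalerA -beta_bal ?mul1r //; exact: hbp.
Qed.

Lemma Ind_reconstruct k u : IG k u ->
  u = \sum_(q <- eps_dec SG eps k) beta q.1 (q.2 *: mu u).
Proof.
move=> hu; have [hdec edec] := eps_decP heps k.
rewrite -{1}(Ind_eps_fix hu) edec scaler_suml; apply: eq_big_seq => q qd.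
have [_ hq2] := hdec q qd; have [hm e] := Ind_pull hq2 hu.
by rewrite -scalerA e beta_scale // mulr1.
Qed.

(* mu is injective: the images of the homogeneous components of a kernel
   element lie in distinct degrees of M, hence vanish, and a homogeneous u
   with mu u = 0 is 0 by reconstruction. *)
Lemma mu_inj : injective mu.
Proof.
move=> t t' e; apply/eqP; rewrite -subr_eq0; apply/eqP.
have : mu (t - t') = 0 by rewrite (additive_mapB muD) e subrr.
move: (t - t') => u hz; have [K [uK [hK eu]]] := Ind_hom_decomposition u.
pose L := [seq ((p.1 * g)%g, mu p.2) | p <- K].
have uL : uniq (map fst L).
  by rewrite -map_comp (map_comp (fun k => (k * g)%g) fst) map_inj_uniq //; apply: mulIg.
have hL : forall x, x \in L -> MG x.1 x.2.
  by move=> x /mapP[p pK ->]; exact: mu_hom (hK p pK).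
have sL : \sum_(x <- L) x.2 = 0.
  by rewrite big_map -(additive_map_sum muD) -eu.
rewrite eu; apply: big1_seq => p /andP[_ pK].
have mp0 : mu p.2 = 0.
  by apply: (hM.1.2.2 L uL hL sL ((p.1 * g)%g, mu p.2)); apply: map_f.
by rewrite (Ind_reconstruct (hK p pK)) mp0 big1 // => q _; rewrite scaler0 beta0r.
Qed.

Section Simple.
Variable N : T -> Prop.
Hypothesis hN : graded_submodule IG N.

Definition Ind_trace (m : M) : Prop := MG g m /\ N (beta 1 m).

(* If the trace is zero then so is N: by reconstruction, a homogeneous u in N
   is a sum of a_i (x) m_i with 1 (x) m_i = b_i u in N. *)
Lemma Ind_trace_zero : (forall m, Ind_trace m -> m = 0) -> forall t, N t -> t = 0.
Proof.
move=> h0 t /hN.2.2.2[l [hl ->]]; apply: big1_seq => p /andP[_ pl].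
have [hp1 hp2] := hl p pl; rewrite (Ind_reconstruct hp1).
apply: big1_seq => q /andP[_ qd]; have [_ hq2] := (eps_decP heps p.1).1 q qd.
have [hm e] := Ind_pull hq2 hp1.
suff -> : q.2 *: mu p.2 = 0 by rewrite beta0r.
by apply: h0; split => //; rewrite -e; apply: hN.2.2.1.
Qed.

(* If the trace is all of M_g then N = T, as T is generated by the s (x) m. *)
Lemma Ind_trace_full : (forall m, MG g m -> N (beta 1 m)) -> forall t, N t.
Proof.
move=> h1 t; have [l [hl ->]] := Ind_gen t.
apply: (submodule_sum hN) => p pl _.
rewrite -[p.1]mulr1 -beta_scale; last exact: hl.
by apply: hN.2.2.1; apply: h1; exact: hl.
Qed.
(* If the trace generates M, it is all of M_g: for m = sum s_i m_i in M_g,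
   taking g-components gives m = sum (s_i)_e m_i, so 1 (x) m lies in N. *)
Lemma Ind_trace_generating :
  (forall x, Sspan Ind_trace x) -> forall m, MG g m -> N (beta 1 m).
Proof.
move=> hspan m hm; have [l [hl em]] := hspan m.
have -> : m = \sum_(p <- l) dsproj SG 1%g p.1 *: p.2.
  rewrite -(dsproj_id hM.1 hm) em (additive_map_sum (dsprojD hM.1 g)).
  apply: eq_big_seq => p pl; rewrite -{1}[g]mul1g (dsproj_scale_hom hgr hM) //.
  exact: (hl p pl).1.
rewrite beta_sumr; last first.
  move=> p pl; rewrite -[g]mul1g.
  by apply: hM.2; [exact: (dsproj_hom hgr.1) | exact: (hl p pl).1].
apply: (submodule_sum hN) => p pl _; have [hp2 hNp] := hl p pl.
have hr := dsproj_hom hgr.1 1%g p.1.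
rewrite -beta_bal // mul1r -[dsproj _ _ _]mulr1 -beta_scale //.
exact: hN.2.2.1.
Qed.
End Simple.

(* Part (i): Ind(M_g) is gr-simple when M is; apply gr-simplicity of M to the
   submodule generated by the trace of N. *)
Lemma Ind_gr_simple : gr_simple MG -> gr_simple IG.
Proof.
move=> hsimp N hN.
have hP : forall m, Ind_trace N m -> exists h, MG h m by move=> m [hm _]; exists g.
have [span0|span_all] := hsimp _ (Sspan_graded hgr hM hP); [left|right].
  apply: (Ind_trace_zero hN) => m hm; apply: span0.
  by rewrite -[m]scale1r; exact: Sspan_gen.
exact: (Ind_trace_full hN (Ind_trace_generating hN span_all)).
Qed.

Section TorsionFree.
Hypothesis htf : Cg_torsion_free MG g.

(* mu maps T_k onto M_{kg}: y = eps k y = sum a_i b_i y = mu (sum a_i (x) b_i y). *)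
Lemma mu_onto_hom k y : MG (k * g)%g y -> exists t, IG k t /\ mu t = y.
Proof.
move=> hy; have [hdec edec] := eps_decP heps k.
have hq : forall q, q \in eps_dec SG eps k -> MG g (q.2 *: y).
  by move=> q qd; rewrite -[g](mulKg k); apply: hM.2 => //; exact: (hdec q qd).2.
exists (\sum_(q <- eps_dec SG eps k) beta q.1 (q.2 *: y)); split.
  exists [seq (q.1, q.2 *: y) | q <- eps_dec SG eps k]; rewrite big_map.
  by split => // p /mapP[q qd ->]; split; [exact: (hdec q qd).1 | exact: hq].
rewrite (additive_map_sum muD) -[RHS](torsion_free_eps hgr heps hM htf hy).
rewrite edec scaler_suml; apply: eq_big_seq => q qd.
by rewrite mub ?scalerA //; exact: hq.
Qed.

Lemma mu_onto y : exists t, mu t = y.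
Proof.
have [hd ->] := dsdecP hM.1 y; elim: (dsdec MG y) hd => [|a l IH] h.
  by exists 0; rewrite big_nil (additive_map0 muD).
have [t1 e1] := IH (fun p pl => h p (mem_behead (s := a :: l) pl)).
have ha : MG (a.1 * g^-1 * g)%g a.2 by rewrite mulgVK; apply: h; exact: mem_head.
have [t2 [_ e2]] := mu_onto_hom ha.
by exists (t2 + t1); rewrite muD e1 e2 big_cons.
Qed.

(* Part (ii): mu identifies Ind(M_g) with M shifted by g. *)
Lemma Ind_gr_injective : gr_injective SG MG -> gr_injective SG IG.
Proof.
apply: (gr_injective_transport (c := g) (phi := mu)).
- by move=> s x y; rewrite muD mu_scale.
- exact: mu_inj.
- exact: mu_onto.
- exact: mu_hom.
- exact: mu_onto_hom.
Qed.
End TorsionFree.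
End Induced.

Lemma uniq_map_inj (T1 T2 : eqType) (f : T1 -> T2) (s : seq T1) :
  uniq (map f s) -> {in s &, injective f}.
Proof.
elim: s => [|a s IH] //= /andP[na us] x y; rewrite !inE.
case/orP=> [/eqP->|xs]; case/orP=> [/eqP->|ys] e //.
- by move: na; rewrite e map_f.
- by move: na; rewrite -e map_f.
- exact: IH.
Qed.

Section RModule.
Variables (G : groupType) (S : pzRingType) (SG : G -> S -> Prop).
Hypothesis hgr : graded_ring SG.
Variables (V : zmodType) (act : S -> V -> V).
Hypothesis hV : R_module SG act.

Lemma act1 x : act 1 x = x.
Proof. by have o := graded_one hgr; exact: (hV x x o o).2.2.2. Qed.

Lemma act0l x : act 0 x = 0.
Proof.
have o := dsum0 hgr.1 1%g; have := (hV x x o o).2.1.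
by rewrite addr0 => e; apply: (addrI (act 0 x)); rewrite -e addr0.
Qed.

Lemma actD r : SG 1%g r -> additive_map (act r).
Proof. by move=> hr x y; exact: (hV x y hr hr).1. Qed.

Lemma actDl r r' x : SG 1%g r -> SG 1%g r' -> act (r + r') x = act r x + act r' x.
Proof. by move=> hr hr'; exact: (hV x x hr hr').2.1. Qed.

Lemma actM r r' x : SG 1%g r -> SG 1%g r' -> act (r * r') x = act r (act r' x).
Proof. by move=> hr hr'; exact: (hV x x hr hr').2.2.1. Qed.
End RModule.

Lemma R_linear_additive (G : groupType) (S : pzRingType) (SG : G -> S -> Prop)
    (V W : zmodType) (actV : S -> V -> V) (actW : S -> W -> W) (f : V -> W) :
  graded_ring SG -> R_module SG actV -> R_module SG actW ->
  R_linear SG actV actW f -> additive_map f.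
Proof.
move=> hgr hV hW hf x y.
by have := hf 1 x y (graded_one hgr); rewrite !(act1 hgr).
Qed.

Lemma R_linear_act (G : groupType) (S : pzRingType) (SG : G -> S -> Prop)
    (V W : zmodType) (actV : S -> V -> V) (actW : S -> W -> W) (f : V -> W) r x :
  graded_ring SG -> R_module SG actV -> R_module SG actW ->
  R_linear SG actV actW f -> SG 1%g r -> f (actV r x) = actW r (f x).
Proof.
move=> hgr hV hW hf hr; have fD := R_linear_additive hgr hV hW hf.
by have := hf r x 0 hr; rewrite !addr0 (additive_map0 fD) addr0.
Qed.

Section Coinduced.
Variables (G : groupType) (S : pzRingType) (SG : G -> S -> Prop).
Variables (A : zmodType) (act : S -> A -> A).

(* The coinduced module of the R-module A: R-linear maps S -> A vanishing on
   all but finitely many homogeneous components of S; S acts by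
   (s f)(t) = f (t s). *)
Definition coind_fun (f : S -> A) : Prop :=
  additive_map f /\ (forall r t, SG 1%g r -> f (r * t) = act r (f t)) /\
  (exists L : seq G, forall j t, j \notin L -> SG j t -> f t = 0).

(* The proof arguments are irrelevant to the predicate; they index the
   carrier type below so that its canonical instances may depend on them. *)
Definition coindb (_ : R_module SG act) (_ : graded_ring SG) : {pred (S -> A)} :=
  fun f => `[< coind_fun f >].

Variables (hA : R_module SG act) (hgr : graded_ring SG).
Local Notation cp := (coindb hA hgr).

Lemma coindb_zmod : GRing.zmod_closed cp.
Proof.
split.
  apply/asboolP; split; first by move=> t u; rewrite addr0.
  split; first by move=> r t hr; rewrite (additive_map0 (actD hA hr)).
  by exists [::].
move=> f h /asboolP[fD [fR [Lf hLf]]] /asboolP[hD [hR [Lh hLh]]]; apply/asboolP.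
have E x : (f - h) x = f x - h x by [].
split; first by move=> t u; rewrite !E fD hD opprD addrACA.
split; first by move=> r t hr; rewrite !E fR // hR // (additive_mapB (actD hA hr)).
exists (Lf ++ Lh) => j t; rewrite mem_cat negb_or => /andP[jf jh] ht.
by rewrite E (hLf j) // (hLh j) // subrr.
Qed.
HB.instance Definition _ := GRing.isZmodClosed.Build (S -> A) cp coindb_zmod.

Inductive coind : Type := Coind (f : S -> A) of f \in cp.
Definition cval (x : coind) := let: Coind f _ := x in f.
HB.instance Definition _ := [isSub of coind for cval].
HB.instance Definition _ := [Choice of coind by <:].
HB.instance Definition _ := [SubChoice_isSubZmodule of coind by <:].

Lemma cvalP (x : coind) : coind_fun (cval x).
Proof. by case: x => f /= /asboolP. Qed.

Lemma cval_inj : injective cval. Proof. exact: val_inj. Qed.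

Lemma cvalD (x y : coind) t : cval (x + y) t = cval x t + cval y t.
Proof. by []. Qed.

Lemma cvalB (x y : coind) t : cval (x - y) t = cval x t - cval y t.
Proof. by []. Qed.

Lemma cval_sum (I : Type) (r : seq I) (F : I -> coind) t :
  cval (\sum_(i <- r) F i) t = \sum_(i <- r) cval (F i) t.
Proof.
elim: r => [|a r IH]; first by rewrite !big_nil.
by rewrite !big_cons cvalD IH.
Qed.

(* Right translation by s preserves finite support: t s has components in
   degrees j d, d a degree of s. *)
Lemma cscale_in (s : S) (x : coind) : (fun t => cval x (t * s)) \in cp.
Proof.
have [fD [fR [L hL]]] := cvalP x; have [hdec edec] := dsdecP hgr.1 s.
apply/asboolP; split; first by move=> t u; rewrite mulrDl fD.
split; first by move=> r t hr; rewrite -mulrA fR.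
exists [seq (k * d^-1)%g | k <- L, d <- map fst (dsdec SG s)] => j t hj ht.
rewrite {1}edec mulr_sumr (additive_map_sum fD).
apply: big1_seq => q /andP[_ qd]; apply: (hL (j * q.1)%g); last first.
  exact: hgr.2 _ _ _ _ ht (hdec q qd).
apply: contra hj => hjq; rewrite -[j](mulgK q.1); apply: allpairs_f => //.
exact: map_f.
Qed.

Definition cscale (s : S) (x : coind) : coind := Coind (cscale_in s x).

Lemma cval_scale s x t : cval (cscale s x) t = cval x (t * s). Proof. by []. Qed.

Lemma cscaleA a b v : cscale a (cscale b v) = cscale (a * b) v.
Proof. by apply: cval_inj; apply: funext => t /=; rewrite mulrA. Qed.
Lemma cscale1 : left_id 1 cscale.
Proof. by move=> v; apply: cval_inj; apply: funext => t /=; rewrite mulr1. Qed.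
Lemma cscaleDr : right_distributive cscale +%R.
Proof. by move=> a u v; apply: cval_inj; apply: funext => t /=. Qed.
Lemma cscaleDl v : {morph cscale^~ v: a b / a + b}.
Proof.
by move=> a b; apply: cval_inj; apply: funext => t /=; rewrite mulrDr (cvalP v).1.
Qed.
HB.instance Definition _ :=
  GRing.Zmodule_isLmodule.Build S coind cscaleA cscale1 cscaleDr cscaleDl.

Definition coind_deg (g h : G) (x : coind) : Prop :=
  forall j t, j != (g * h^-1)%g -> SG j t -> cval x t = 0.

Lemma coind_restrict_in (x : coind) k : (fun t => cval x (dsproj SG k t)) \in cp.
Proof.
have [fD [fR _]] := cvalP x; apply/asboolP; split.
  by move=> t u; rewrite (dsprojD hgr.1) fD.
split; first by move=> r t hr; rewrite (dsproj_mul_e hgr) // fR.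
exists [:: k] => j t; rewrite inE => hj ht.
by rewrite (dsproj_in hgr.1 k ht) (negbTE hj) (additive_map0 fD).
Qed.

Definition coind_restrict (x : coind) k : coind := Coind (coind_restrict_in x k).

Lemma coind_decomposition g (x : coind) : exists l : seq (G * coind),
  (forall q, q \in l -> coind_deg g q.1 q.2) /\ x = \sum_(q <- l) q.2.
Proof.
have [fD [_ [L hL]]] := cvalP x.
exists [seq ((k^-1 * g)%g, coind_restrict x k) | k <- undup L]; split.
  move=> q /mapP[k _ ->] j t /=; rewrite invgM invgK mulgA mulgV mul1g => hj ht.
  by rewrite (dsproj_in hgr.1 k ht) (negbTE hj) (additive_map0 fD).
apply: cval_inj; apply: funext => t; rewrite big_map cval_sum /=.
apply: (sum_dsproj_fun hgr.1); [exact: undup_uniq | exact: fD |].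
by move=> j u; rewrite mem_undup; apply: hL.
Qed.

Lemma coind_independent g (l : seq (G * coind)) :
  uniq (map fst l) -> (forall q, q \in l -> coind_deg g q.1 q.2) ->
  \sum_(q <- l) q.2 = 0 -> forall q, q \in l -> q.2 = 0.
Proof.
move=> ul hl hs q ql; apply: cval_inj; apply: funext => t.
transitivity (0 : A); last by [].
set k := (g * q.1^-1)%g.
have -> : cval q.2 t = cval q.2 (dsproj SG k t).
  by apply: (dsproj_fun hgr.1); [exact: (cvalP q.2).1 | exact: hl].
have <- : \sum_(m <- l) cval m.2 (dsproj SG k t) = 0 by rewrite -cval_sum hs.
rewrite (bigD1_seq q) //= ?(map_uniq ul) // big1_seq ?addr0 // => m /andP[mq ml].
apply: (hl m ml) (dsproj_hom hgr.1 k t); apply: contra mq => /eqP e.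
apply/eqP; apply: (uniq_map_inj ul) => //; apply: invg_inj; apply: (mulgI g).
by rewrite -e.
Qed.

Lemma coind_graded g : graded_module SG (coind_deg g).
Proof.
split; last first.
  move=> l h s x hs hx j t hj ht; rewrite cval_scale; apply: (hx (j * l)%g).
    apply: contra hj => /eqP e; apply/eqP.
    by rewrite -[j](mulgK l) e invgM !mulgA.
  exact: hgr.2.
split; first split.
- by move=> j t _ _.
- by move=> x y hx hy j t hj ht; rewrite cvalB (hx j) // (hy j) // subrr.
split; [exact: coind_decomposition | exact: coind_independent].
Qed.
End Coinduced.

Section CoindMap.
Variables (G : groupType) (S : pzRingType) (SG : G -> S -> Prop).
Hypothesis hgr : graded_ring SG.
Variable eps : G -> S.
Hypothesis heps : eps_unit SG eps.
Variables (A B : zmodType) (actA : S -> A -> A) (actB : S -> B -> B).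
Hypotheses (hA : R_module SG actA) (hB : R_module SG actB).
Variable p : A -> B.
Hypothesis hpL : R_linear SG actA actB p.

Let pD : additive_map p := R_linear_additive hgr hA hB hpL.

Lemma coind_map_in (x : coind hA hgr) : (fun t => p (cval x t)) \in coindb hB hgr.
Proof.
have [fD [fR [L hL]]] := cvalP x; apply/asboolP.
split; first by move=> t u; rewrite fD pD.
split; first by move=> r t hr; rewrite fR // (R_linear_act _ hgr hA hB hpL).
by exists L => j t hj ht; rewrite (hL j) // (additive_map0 pD).
Qed.

Definition coind_map (x : coind hA hgr) : coind hB hgr := Coind (coind_map_in x).

Lemma coind_map_morph (g : G) :
  gr_morphism (coind_deg (hA := hA) (hgr := hgr) g)
              (coind_deg (hA := hB) (hgr := hgr) g) coind_map.
Proof.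
split; first by move=> s x y; apply: cval_inj; apply: funext => t /=; rewrite pD.
by move=> h x hx j t hj ht /=; rewrite (hx j t hj ht) (additive_map0 pD).
Qed.

Hypothesis hpS : forall b, exists a, p a = b.

Definition psect (b : B) : A := epsilon (inhabits 0) (fun a => p a = b).

Lemma psectK b : p (psect b) = b.
Proof. exact: (epsilon_spec _ _ (hpS b)). Qed.

(* The lift of y : S -> B supported on S_k, using eps_{k^-1} = sum a_i b_i:
     t |-> sum_i (t_k a_i) . psect (y b_i). *)
Definition coind_lift (y : coind hB hgr) (k : G) (t : S) : A :=
  \sum_(q <- eps_dec SG eps (k^-1)%g)
    actA (dsproj SG k t * q.1) (psect (cval y q.2)).

Lemma coind_lift_e k t q :
  q \in eps_dec SG eps (k^-1)%g -> SG 1%g (dsproj SG k t * q.1).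
Proof.
move=> qd; rewrite -(mulgV k); apply: hgr.2; first exact: (dsproj_hom hgr.1).
exact: ((eps_decP heps (k^-1)%g).1 q qd).1.
Qed.

Lemma coind_lift_support y k j t : j != k -> SG j t -> coind_lift y k t = 0.
Proof.
move=> hj ht; rewrite /coind_lift big1 // => q _.
by rewrite (dsproj_in hgr.1 k ht) (negbTE hj) mul0r (act0l hgr hA).
Qed.

Lemma coind_lift_in y k : coind_lift y k \in coindb hA hgr.
Proof.
apply/asboolP; split.
  move=> t u; rewrite /coind_lift -big_split; apply: eq_big_seq => q qd /=.
  by rewrite (dsprojD hgr.1) mulrDl (actDl hA) //; exact: coind_lift_e.
split; last by exists [:: k] => j t; rewrite inE; exact: coind_lift_support.
move=> r t hr; rewrite /coind_lift (additive_map_sum (actD hA hr)).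
apply: eq_big_seq => q qd; rewrite (dsproj_mul_e hgr) // -mulrA.
by rewrite (actM hA) //; exact: coind_lift_e.
Qed.

(* When y is supported on S_k, the lift is a preimage of y:
   p (lift t) = sum_i y (t_k a_i b_i) = y (t_k eps_{k^-1}) = y (t_k) = y t. *)
Lemma coind_lift_spec y k :
  (forall j t, j != k -> SG j t -> cval y t = 0) ->
  coind_map (Coind (coind_lift_in y k)) = y.
Proof.
move=> hy; have [yD [yR _]] := cvalP y; have [hdec edec] := eps_decP heps (k^-1)%g.
apply: cval_inj; apply: funext => t /=; rewrite /coind_lift (additive_map_sum pD).
transitivity (\sum_(q <- eps_dec SG eps (k^-1)%g) cval y (dsproj SG k t * q.1 * q.2)).
  apply: eq_big_seq => q qd; have he := coind_lift_e t qd.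
  by rewrite (R_linear_act _ hgr hA hB hpL) // psectK yR.
rewrite -(additive_map_sum yD).
under eq_bigr => q _ do rewrite -mulrA.
rewrite -mulr_sumr -edec (eps_right heps); last first.
  by rewrite invgK; exact: (dsproj_hom hgr.1).
by symmetry; apply: (dsproj_fun hgr.1).
Qed.

Lemma coind_map_onto (g : G) (y : coind hB hgr) : exists x, coind_map x = y.
Proof.
have [l [hl ->]] := coind_decomposition g y.
elim: l hl => [|q l IH] h.
  exists 0; apply: cval_inj; apply: funext => t /=.
  by rewrite big_nil (additive_map0 pD).
have [x1 e1] := IH (fun r rl => h r (mem_behead (s := q :: l) rl)).
pose x2 := Coind (coind_lift_in q.2 (g * q.1^-1)%g).
have e2 : coind_map x2 = q.2 by apply: coind_lift_spec; exact: h (mem_head _ _).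
exists (x2 + x1); rewrite big_cons -e1 -e2; apply: cval_inj; apply: funext => t /=.
by rewrite pD.
Qed.
End CoindMap.

Section CoindOfLinear.
Variables (G : groupType) (S : pzRingType) (SG : G -> S -> Prop).
Hypothesis hgr : graded_ring SG.
Variables (B : zmodType) (actB : S -> B -> B).
Hypothesis hB : R_module SG actB.
Variables (M : lmodType S) (MG : G -> M -> Prop) (g : G).
Hypothesis hM : graded_module SG MG.
Variable f : M -> B.
Hypothesis hf : forall (r : S) x y, SG 1%g r -> MG g x -> MG g y ->
  f (r *: x + y) = actB r (f x) + f y.

Lemma Mg_linearD x y : MG g x -> MG g y -> f (x + y) = f x + f y.
Proof.
by move=> hx hy; have := @hf 1 x y (graded_one hgr) hx hy; rewrite scale1r (act1 hgr hB).
Qed.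

Lemma Mg_linear0 : f 0 = 0.
Proof.
have h0 := dsum0 hM.1 g; apply: (addrI (f 0)).
by rewrite -Mg_linearD // !addr0.
Qed.

Lemma Mg_linearR r x : SG 1%g r -> MG g x -> f (r *: x) = actB r (f x).
Proof.
move=> hr hx; have := @hf r x 0 hr hx (dsum0 hM.1 g).
by rewrite !addr0 Mg_linear0 addr0.
Qed.

Lemma coind_of_linear_in x : (fun t => f (dsproj MG g (t *: x))) \in coindb hB hgr.
Proof.
have hproj v := dsproj_hom hM.1 g v.
apply/asboolP; split.
  by move=> t u; rewrite scalerDl (dsprojD hM.1) Mg_linearD.
split.
  by move=> r t hr; rewrite -scalerA (dsproj_scale_e hM) // Mg_linearR.
have [hdec edec] := dsdecP hM.1 x.
exists [seq (g * q.1^-1)%g | q <- dsdec MG x] => j t hj ht.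
rewrite {1}edec scaler_sumr (additive_map_sum (dsprojD hM.1 g)) big1_seq ?Mg_linear0 //.
move=> q /andP[_ qd]; rewrite (dsproj_in hM.1 g (hM.2 _ _ _ _ ht (hdec q qd))).
case: eqP => // e; exfalso; move/negP: hj; apply.
by rewrite -[j](mulgK q.1) e; exact: (map_f (fun q => (g * q.1^-1)%g) qd).
Qed.

Definition coind_of_linear x : coind hB hgr := Coind (coind_of_linear_in x).

Lemma coind_of_linear_morph :
  gr_morphism MG (coind_deg (hA := hB) (hgr := hgr) g) coind_of_linear.
Proof.
have hproj v := dsproj_hom hM.1 g v.
split.
  move=> s x y; apply: cval_inj; apply: funext => t /=.
  by rewrite scalerDr scalerA (dsprojD hM.1) Mg_linearD.
move=> h x hx j t hj ht /=.
rewrite (dsproj_in hM.1 g (hM.2 _ _ _ _ ht hx)); case: eqP => [e|_].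
  by move: hj; rewrite -e mulgK eqxx.
exact: Mg_linear0.
Qed.
End CoindOfLinear.

(* Part (iii): lift f : M_g -> B through the graded surjection Coind A -> Coind B
   using projectivity of M, then evaluate at 1. *)
Lemma gr_projective_component (G : groupType) (S : pzRingType)
    (SG : G -> S -> Prop) (g : G) (eps : G -> S) :
  graded_ring SG -> eps_unit SG eps ->
  forall (M : lmodType S) (MG : G -> M -> Prop),
    graded_module SG MG -> gr_projective SG MG -> R_projective_component SG MG g.
Proof.
move=> hgr heps M MG hM hproj A B actA actB hA hB p hpL hpS f hf.
have [H [[HL HG] HP]] := hproj _ _ _ _ (coind_graded hA hgr g)
  (coind_graded hB hgr g) _ (coind_map_morph hgr hA hB hpL g)
  (coind_map_onto (hgr := hgr) heps hA hpL hpS g) _ (coind_of_linear_morph hgr hB hM hf).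
exists (fun x => cval (H x) 1); split.
  move=> r x y hr hx hy; rewrite HL cvalD cval_scale mul1r -{1}[r]mulr1.
  by rewrite (cvalP (H x)).2.1.
move=> x hx; have := congr1 (fun z => cval z 1) (HP x); rewrite /= => ->.
by rewrite scale1r (dsproj_id hM.1 hx).
Qed.

Unset Implicit Arguments.

Theorem mainTheorem4 (G : groupType) (S : pzRingType) (SG : G -> S -> Prop)
    (g : G) :
  graded_ring SG -> eps_strongly_graded SG ->
  (* (i) *)
  (forall (M : lmodType S) (MG : G -> M -> Prop),
     graded_module SG MG -> gr_simple MG ->
     forall (T : lmodType S) (beta : S -> M -> T), is_Ind SG MG g beta ->
       (forall t : T, t = 0) \/ gr_simple (Ind_grading SG MG g beta)) /\
  (* (ii) *)
  (forall (M : lmodType S) (MG : G -> M -> Prop),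
     graded_module SG MG -> gr_injective SG MG -> Cg_torsion_free MG g ->
     forall (T : lmodType S) (beta : S -> M -> T), is_Ind SG MG g beta ->
       gr_injective SG (Ind_grading SG MG g beta)) /\
  (* (iii) *)
  (forall (M : lmodType S) (MG : G -> M -> Prop),
     graded_module SG MG -> gr_projective SG MG ->
     R_projective_component SG MG g).
Proof.
move=> hgr [eps heps]; split; [|split].
- move=> M MG hM hsimp T beta hI; right.
  exact (Ind_gr_simple hgr hM hI heps hsimp).
- move=> M MG hM hinj htf T beta hI.
  exact (Ind_gr_injective hgr hM hI heps htf hinj).
- exact: gr_projective_component hgr heps.
Qed.
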